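(* Let $X$ be a compact metric space and $T:X\to X$ a local homeomorphism. Then \[{\rm dim}_{\rm tow}(X,T)\le 2\,{\rm dim}_{\rm Rok}(X,T)+1.\]
   Context: For $j\ge0$, $T^{-j}(A)$ is the preimage under $T^j$. Rokhlin dimension: an open $N$-Rokhlin tower is a collection $\{U_0,\dots,U_{N-1}\}$ of nonempty open sets with $U_k=T^{-1}(U_{k-1})$ for $k\ge1$ and pairwise disjoint closures; ${\rm dim}_{\rm Rok}(X,T)$ is the least $d$ such that for every $N\ge1$, $X$ is covered by the members of at most $d+1$ open $N$-Rokhlin towers. Tower dimension: ${\rm dim}_{\rm tow}(X,T)$ is the least $d\in\mathbb{N}$ such that for every finite $E\subseteq\mathbb{Z}$ there are finitely many pairs $(V_1,S_1),\dots,(V_s,S_s)$ with $V_i\subseteq X$ open and $S_i\subseteq\mathbb{N}$ finite such that: (a) $T^{-m}(\overline{V_i})\cap T^{-n}(\overline{V_i})=\varnothing$ for distinct $m,n\in S_i$; (b) the family $\{T^{-n}(V_i):n\in S_i,1\le i\le s\}$ has chromatic number at most $d+1$, i.e. can be partitioned into at most $d+1$ subfamilies each consisting of pairwise disjoint sets; (c) this family covers $X$; (d) for every $x\in X$ there are $i$ and $n\in S_i$ with $x\in T^{-n}(V_i)$ and $E+n\subseteq S_i$. (Value $\infty$ if no such $d$.) *)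

From HB Require Import structures.
From mathcomp Require Import all_boot all_order all_algebra.
From mathcomp Require Import all_classical all_reals all_analysis.
Set Implicit Arguments. Unset Strict Implicit. Unset Printing Implicit Defensive.
Import Order.TTheory GRing.Theory Num.Theory.
Local Open Scope classical_set_scope.

Section Dims.
Context {R : realType} {X : metricType R}.

(* T is a local homeomorphism: continuous, and every point has an open
   neighbourhood U such that T restricted to U is injective and maps open
   subsets of U onto open sets (so T|U : U -> T(U) is a homeomorphism onto
   an open set). *)
Definition local_homeomorphism (T : X -> X) : Prop :=
  continuous T /\
  forall x : X, exists U : set X,
    [/\ open U, U x, {in U &, injective T} &
        forall V : set X, open V -> V `<=` U -> open (T @` V)].

Definition preT (T : X -> X) (j : nat) (A : set X) : set X := (iter j T) @^-1` A.

Definition open_rokhlin_tower (T : X -> X) (N : nat) (U : nat -> set X) : Prop :=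
  [/\ forall k, (k < N)%N -> open (U k) /\ U k !=set0,
      forall k, (0 < k < N)%N -> U k = preT T 1 (U k.-1) &
      forall k l, (k < N)%N -> (l < N)%N -> k <> l ->
        closure (U k) `&` closure (U l) = set0].

Definition rokhlin_prop (T : X -> X) (d : nat) : Prop :=
  forall N : nat, (1 <= N)%N ->
    exists (m : nat) (U : nat -> nat -> set X),
      [/\ (m <= d.+1)%N,
          forall i, (i < m)%N -> open_rokhlin_tower T N (U i) &
          forall x : X, exists i k, [/\ (i < m)%N, (k < N)%N & U i k x]].

Definition tower_prop (T : X -> X) (d : nat) : Prop :=
  forall E : set int, finite_set E ->
    exists (s : nat) (V : nat -> set X) (S : nat -> set nat),
      [/\ forall i, (i < s)%N -> open (V i) /\ finite_set (S i),
          forall i m n, (i < s)%N -> S i m -> S i n -> m <> n ->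
            preT T m (closure (V i)) `&` preT T n (closure (V i)) = set0,
          (* (b) the family {T^{-n}(V_i) : n in S_i, i < s} (a set of sets)
             has chromatic number at most d+1 *)
          exists c : set X -> nat,
            (forall i n, (i < s)%N -> S i n -> (c (preT T n (V i)) <= d)%N) /\
            (forall i n j m, (i < s)%N -> S i n -> (j < s)%N -> S j m ->
               c (preT T n (V i)) = c (preT T m (V j)) ->
               preT T n (V i) <> preT T m (V j) ->
               preT T n (V i) `&` preT T m (V j) = set0),
          forall x : X, exists i n, [/\ (i < s)%N, S i n & preT T n (V i) x] &
          forall x : X, exists i n,
            [/\ (i < s)%N, S i n, preT T n (V i) x &
                forall e, E e -> exists k, S i k /\ (k%:Z = e + n%:Z)%R]].

(* dimensions valued in nat extended by infinity (None = infinity):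
   the least d satisfying P, or None if there is none *)
Lemma least_dim_ex (P : nat -> Prop) :
  (exists d, P d) -> exists d, `[< P d >].
Proof. by move=> [d hd]; exists d; apply/asboolP. Qed.

Definition least_dim (P : nat -> Prop) : option nat :=
  match pselect (exists d, P d) with
  | left h => Some (ex_minn (least_dim_ex h))
  | right _ => None
  end.

Definition dim_Rok (T : X -> X) : option nat := least_dim (rokhlin_prop T).
Definition dim_tow (T : X -> X) : option nat := least_dim (tower_prop T).

End Dims.

Definition xle (a b : option nat) : Prop :=
  match a, b with
  | _, None => True
  | None, Some _ => False
  | Some m, Some n => (m <= n)%N
  end.

Definition xtwice_plus1 (a : option nat) : option nat :=
  omap (fun d => (2 * d + 1)%N) a.

From mathcomp Require Import all_boot all_order all_algebra.
From mathcomp Require Import all_classical all_reals all_analysis.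
From mathcomp Require Import zify.
Local Open Scope classical_set_scope.

(* Fix d + 1 open Rokhlin towers of height N = 4L + 1 covering X, where L bounds
   |e| for e in E.  Since T is a local homeomorphism, preimages commute with
   closures, so T^{-p}(cl U_0) and T^{-q}(cl U_0) are disjoint whenever
   0 < |p - q| < N.  Take as V_i the bases U_0 of the towers together with
   their preimages T^{-(2L+1)}(U_0), each with the N levels 0, ..., N-1:
   this gives at most 2d + 2 towers, each a colour class.  A point x lies
   in level k + L of some original tower, and either k + 2L < N or the
   shifted tower places x at level k - L - 1 >= L; in both cases the
   E-window around the level stays inside the tower. *)

Section Preimages.
Context {R : realType} {X : metricType R} (T : X -> X).

Lemma preTD m n (A : set X) : preT T m (preT T n A) = preT T (n + m) A.
Proof. by apply/funext => x; rewrite /preT /= iterD. Qed.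

Lemma continuous_iter n : continuous T -> continuous (iter n T).
Proof.
move=> cT; elim: n => [|n IHn] x /=; first exact: cvg_id.
exact: continuous_comp (IHn x) (cT _).
Qed.

Lemma closure_preT_sub n (A : set X) : continuous T ->
  closure (preT T n A) `<=` preT T n (closure A).
Proof.
move=> cT; have clA : closed (preT T n (closure A)).
  by apply: preimage_closed; [move=> x _; exact: continuous_iter|exact: closed_closure].
rewrite [X in _ `<=` X](closure_id _).1 //.
by apply: closureS; apply: preimage_subset; exact: subset_closure.
Qed.

Hypothesis homT : local_homeomorphism T.

Lemma preT1_closure_sub (A : set X) :
  preT T 1 (closure A) `<=` closure (preT T 1 A).
Proof.
have [_ locT] := homT.
move=> x /= clTx B; rewrite nbhsE => -[B' [oB' B'x] B'B].
have [U [oU Ux _ openTU]] := locT x.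
have : nbhs (T x) (T @` (B' `&` U)).
  apply: open_nbhs_nbhs; split; last by exists x.
  by apply: openTU; [exact: openI | exact: subIsetr].
move=> /clTx [a [Aa [w [B'w Uw] Twa]]].
by exists w; split; [rewrite /preT /= Twa|exact: B'B].
Qed.

Lemma preT_closure_sub n (A : set X) :
  preT T n (closure A) `<=` closure (preT T n A).
Proof.
elim: n A => [|n IHn] A //.
rewrite -add1n -!preTD => x /preT1_closure_sub; exact: IHn.
Qed.

End Preimages.

Section SeparatedBases.
Context {R : realType} {X : metricType R} (T : X -> X).

(* Stated with T^{-p}(cl B) rather than cl T^{-p}(B), as in condition (a) of
   the tower dimension. *)
Definition separated_base (N : nat) (B : set X) : Prop :=
  forall p q, p <> q -> (p < q + N)%N -> (q < p + N)%N ->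
    preT T p (closure B) `&` preT T q (closure B) = set0.

Lemma separated_base_levels N B n n' : separated_base N B ->
  n <> n' -> (n < N)%N -> (n' < N)%N -> preT T n B `&` preT T n' B = set0.
Proof.
move=> sepB nn' nN n'N; apply/seteqP; split => // z [Bz B'z].
rewrite -(sepB n n') //; first by split; apply: subset_closure.
- exact: ltn_addl.
- exact: ltn_addl.
Qed.

Lemma separated_base_preT N M B : continuous T ->
  separated_base N B -> separated_base N (preT T M B).
Proof.
move=> cT sepB p q pq pN qN; apply/seteqP; split => // z [zp zq].
rewrite -(sepB (M + p) (M + q))%N; try lia.
by split; rewrite -preTD; apply: closure_preT_sub.
Qed.

Lemma rokhlin_tower_level N U : open_rokhlin_tower T N U ->
  forall k, (k < N)%N -> U k = preT T k (U 0%N).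
Proof.
move=> [_ Urec _]; elim=> [|k IHk] kN //.
by rewrite Urec ?kN //= IHk ?(ltnW kN) // preTD addn1.
Qed.

Lemma rokhlin_tower_separated N U : local_homeomorphism T ->
  open_rokhlin_tower T N U -> separated_base N (U 0%N).
Proof.
move=> homT towU.
suff sep_lt p q : (p < q < p + N)%N ->
    preT T p (closure (U 0%N)) `&` preT T q (closure (U 0%N)) = set0.
  move=> p q pq pN qN; case: (ltngtP p q) => [lt_pq|lt_qp|//].
  - by apply: sep_lt; rewrite lt_pq qN.
  - by rewrite setIC; apply: sep_lt; rewrite lt_qp pN.
move=> /andP[lt_pq qN]; apply/seteqP; split => // z [zp zq].
have jN : (q - p < N)%N by lia.
have [_ _ disjU] := towU.
suff : (closure (U 0%N) `&` closure (U (q - p)%N)) (iter p T z).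
  by rewrite disjU ?(leq_ltn_trans _ jN) //; lia.
split=> //; rewrite (rokhlin_tower_level _ _ towU _ jN).
apply: preT_closure_sub => //; rewrite /preT /= -iterD.
by have -> : (q - p + p = q)%N by lia.
Qed.

Lemma separated_bases_coloring s N (V : nat -> set X) :
  (forall i, (i < s)%N -> separated_base N (V i)) ->
  exists c : set X -> nat,
    (forall i n, (i < s)%N -> (n < N)%N -> (c (preT T n (V i)) < s)%N) /\
    (forall i n j n', (i < s)%N -> (n < N)%N -> (j < s)%N -> (n' < N)%N ->
       c (preT T n (V i)) = c (preT T n' (V j)) ->
       preT T n (V i) <> preT T n' (V j) ->
       preT T n (V i) `&` preT T n' (V j) = set0).
Proof.
move=> sepV.
pose towers_of (A : set X) : set nat :=
  [set j | (j < s)%N /\ exists2 n, (n < N)%N & A = preT T n (V j)].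
pose c A := xget 0%N (towers_of A).
have colP i n : (i < s)%N -> (n < N)%N -> towers_of (preT T n (V i)) (c (preT T n (V i))).
  by move=> iS nN; apply: xgetPex; exists i; split=> //; exists n.
exists c; split=> [i n iS nN|i n j n' iS nN jS n'N cij neq]; first by case: (colP i n).
have [cS [n1 n1N e1]] := colP i n iS nN.
have [_ [n2 n2N e2]] := colP j n' jS n'N.
rewrite e1 e2 -cij in neq *.
apply: separated_base_levels (sepV _ cS) _ n1N n2N.
by move=> n12; apply: neq; rewrite n12.
Qed.

End SeparatedBases.

Section Doubling.
Context {R : realType} {X : metricType R} (T : X -> X).

Lemma finite_int_bound (E : set int) : finite_set E ->
  exists L : nat, forall e, E e -> (`|e| <= L)%N.
Proof.
move=> /finite_seqP [s ->]; elim: s => [|a s [L IHs]]; first by exists 0%N.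
exists (`|a| + L)%N => e /=; rewrite inE => /orP [/eqP ->|es].
  exact: leq_addr.
exact: leq_trans (IHs _ es) (leq_addl _ _).
Qed.

Lemma int_shift_window (e : int) (L n N : nat) :
  (`|e| <= L)%N -> (L <= n)%N -> (n + L < N)%N ->
  exists k : nat, (k < N)%N /\ (k%:Z = e + n%:Z)%R.
Proof. by move=> eL Ln nN; exists (absz (e + n%:Z)%R); split; lia. Qed.

Definition doubled_bases (B : nat -> set X) (m M i : nat) : set X :=
  if (i < m)%N then B i else preT T M (B (i - m)%N).

Lemma doubled_bases_cover L m (B : nat -> set X) :
  (forall x, exists i k, [/\ (i < m)%N, (k < (4 * L).+1)%N & preT T k (B i) x]) ->
  forall x, exists i n,
    [/\ (i < 2 * m)%N, (n < (4 * L).+1)%N,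
        preT T n (doubled_bases B m (2 * L).+1 i) x &
        forall e : int, (`|e| <= L)%N ->
          exists k, (k < (4 * L).+1)%N /\ (k%:Z = e + n%:Z)%R].
Proof.
move=> covB x; have [i [k [im kN Bk]]] := covB (iter L T x).
have xkL : preT T (k + L) (B i) x by rewrite /preT /= iterD.
case: (ltnP (k + 2 * L) (4 * L).+1) => [low|high].
- exists i, (k + L)%N; split; [lia|lia| |].
  + by rewrite /doubled_bases im.
  + by move=> e eL; apply: int_shift_window eL _ _; lia.
- exists (m + i)%N, (k - L - 1)%N; split; [lia|lia| |].
  + rewrite /doubled_bases ifF; last by lia.
    by rewrite preTD addKn; have -> : ((2 * L).+1 + (k - L - 1) = k + L)%N by lia.
  + by move=> e eL; apply: int_shift_window eL _ _; lia.
Qed.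

End Doubling.

Lemma rokhlin_prop_tower_prop {R : realType} {X : metricType R} (T : X -> X) d :
  local_homeomorphism T -> rokhlin_prop T d -> tower_prop T (2 * d + 1).
Proof.
move=> homT rokT E finE.
have [L boundE] := finite_int_bound _ finE.
have [m [U [md towU covU]]] := rokT (4 * L).+1 isT.
have cT : continuous T by case: homT.
pose V := doubled_bases T (fun i => U i 0%N) m (2 * L).+1.
have baseV i : (i < 2 * m)%N -> open (V i) /\ separated_base T (4 * L).+1 (V i).
  have baseU j : (j < m)%N -> open (U j 0%N) /\ separated_base T (4 * L).+1 (U j 0%N).
    move=> jm; split; first by have [/(_ 0%N isT) []] := towU j jm.
    exact: rokhlin_tower_separated (towU j jm).
  rewrite /V /doubled_bases; case: ifP => [im _|/negbT im2 i2m]; first exact: baseU.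
  have [oU sepU] := baseU (i - m)%N ltac:(lia).
  split; last exact: separated_base_preT.
  by apply: open_comp => // x _; exact: continuous_iter.
have covB x : exists i k,
    [/\ (i < m)%N, (k < (4 * L).+1)%N & preT T k (U i 0%N) x].
  have [i [k [im kN Uk]]] := covU x; exists i, k; split=> //.
  by rewrite -(rokhlin_tower_level T _ _ (towU i im) k kN).
have covV := doubled_bases_cover T _ _ _ covB.
have [c [cS cdisj]] := separated_bases_coloring T _ _ _ (fun i im => (baseV i im).2).
exists (2 * m)%N, V, (fun=> `I_(4 * L).+1); split.
- by move=> i im; split; [exact: (baseV i im).1|exact: finite_II].
- move=> i a b im /= aN bN ab.
  by apply: (baseV i im).2 ab _ _; lia.
- exists c; split=> [i n im nN|]; last exact: cdisj.
  by have := cS i n im nN; lia.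
- by move=> x; have [i [n [? ? ? _]]] := covV x; exists i, n.
- move=> x; have [i [n [im nN Vx win]]] := covV x.
  by exists i, n; split=> // e /boundE /win.
Qed.

Lemma least_dim_le_omap (P Q : nat -> Prop) (f : nat -> nat) :
  (forall d, P d -> Q (f d)) -> xle (least_dim Q) (omap f (least_dim P)).
Proof.
move=> PQ; rewrite /least_dim.
case: (pselect (exists d, P d)) => [exP|_]; last by case: pselect.
case: ex_minnP => dP /asboolP /PQ Qf _.
case: pselect => [exQ|[]]; last by exists (f dP).
case: ex_minnP => dQ _ minQ; exact/minQ/asboolP.
Qed.

Theorem lemma5p2 (R : realType) (X : metricType R) (T : X -> X) :
  compact [set: X] -> local_homeomorphism T ->
  xle (dim_tow T) (xtwice_plus1 (dim_Rok T)).
Proof.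
move=> _ homT.
apply: (@least_dim_le_omap (rokhlin_prop T) (tower_prop T) (fun d => 2 * d + 1)%N).
by move=> d; exact: rokhlin_prop_tower_prop.
Qed.
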